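(* Let $X$ be an extremally disconnected topological space satisfying $S_1(s\mathcal{O},s\mathcal{O})$. Let $\mathcal{V}_1,\mathcal{V}_2,\dots$ be nonempty finite families of semi-open subsets of $X$ such that for each $x\in X$ we have $x\in\bigcup\mathcal{V}_n$ for infinitely many $n$. Then there are $U_1\in\mathcal{V}_1, U_2\in\mathcal{V}_2,\dots$ such that $\{U_1,U_2,\dots\}$ covers $X$.
   Context: A subset $A$ of a topological space $X$ is semi-open if $A\subseteq \mathrm{Cl}(\mathrm{Int}(A))$; a semi-open cover is a cover by semi-open sets. A space is extremally disconnected if the closure of every open set is open. $X$ satisfies $S_1(s\mathcal{O},s\mathcal{O})$ (is semi-Rothberger) if for each sequence $\langle\mathcal{U}_n:n\in\omega\rangle$ of semi-open covers of $X$ there are $U_n\in\mathcal{U}_n$ ($n\in\omega$) with $\{U_n:n\in\omega\}$ a cover of $X$. *)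

From HB Require Import structures.
From mathcomp Require Import all_boot all_order.
From mathcomp Require Import all_classical all_reals topology.
Set Implicit Arguments. Unset Strict Implicit. Unset Printing Implicit Defensive.
Local Open Scope classical_set_scope.

Definition semi_open {X : topologicalType} (A : set X) : Prop :=
  A `<=` closure (interior A).

Definition semi_open_cover {X : topologicalType} (U : set (set X)) : Prop :=
  (forall A, U A -> semi_open A) /\ (forall x : X, exists2 A, U A & A x).

Definition extremally_disconnected (X : topologicalType) : Prop :=
  forall U : set X, open U -> open (closure U).

Definition semi_Rothberger (X : topologicalType) : Prop :=
  forall Us : nat -> set (set X), (forall n, semi_open_cover (Us n)) ->
  exists U : nat -> set X, (forall n, Us n (U n)) /\
    (forall x : X, exists n, U n x).

From HB Require Import structures.
From mathcomp Require Import all_boot all_order finmap.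
From mathcomp Require Import all_classical all_reals topology.
Set Implicit Arguments. Unset Strict Implicit. Unset Printing Implicit Defensive.
Local Open Scope classical_set_scope.

(* For m : nat let W_m be the family of all intersections
   V_{n_0}-member ∩ ... ∩ V_{n_k}-member taken over a list of at least m+1
   DISTINCT indices n_0, ..., n_k.
   - In an extremally disconnected space finite intersections of semi-open
     sets are semi-open, so each W_m consists of semi-open sets; and since
     every point lies in ⋃V_n for infinitely many n, each W_m covers X.
   - Semi-Rothbergerness picks P_m ∈ W_m (with index list S_m) covering X.
   - As S_m has more than m distinct entries, one can choose INJECTIVELY an
     index r(m) ∈ S_m (a greedy system of distinct representatives).
   - Put U_{r(m)} := the V_{r(m)}-member used in P_m, and choose U_n ∈ V_n
     arbitrarily for n outside the range of r.  Then P_m ⊆ U_{r(m)}, so the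
     U_n cover X. *)

Lemma semi_openT (X : topologicalType) : semi_open (@setT X).
Proof. by rewrite /semi_open interiorT closureT. Qed.

(* In an extremally disconnected space the intersection of two semi-open
   sets is semi-open: Cl(Int A) is open, so a neighbourhood of a point of
   A ∩ B can be shrunk inside Cl(Int A) and then inside Int B. *)
Lemma semi_openI (X : topologicalType) (A B : set X) :
  extremally_disconnected X -> semi_open A -> semi_open B ->
  semi_open (A `&` B).
Proof.
move=> ED hA hB x [Ax Bx] N; rewrite nbhsE => -[O [oO Ox] ON].
have oClA := ED _ (@open_interior _ A).
have [y [intBy [Oy ClAy]]] := hB x Bx (O `&` closure (interior A))
  (open_nbhs_nbhs (conj (openI oO oClA) (conj Ox (hA x Ax)))).
have [z [intAz [Oz intBz]]] := ClAy (O `&` interior B)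
  (open_nbhs_nbhs (conj (openI oO (@open_interior _ B)) (conj Oy intBy))).
by exists z; split; [rewrite interiorI | apply: ON].
Qed.

Lemma semi_open_bigcap_seq (X : topologicalType) (I : choiceType) (s : seq I)
    (F : I -> set X) :
  extremally_disconnected X -> (forall i, i \in s -> semi_open (F i)) ->
  semi_open (\bigcap_(i in [set` s]) F i).
Proof.
move=> ED hF; rewrite bigcap_seq big_seq.
apply: (big_ind semi_open (@semi_openT X)) => [A B|i /hF //].
exact: semi_openI.
Qed.

Section DistinctRepresentatives.
Variable S : nat -> seq nat.

Definition first_fresh (used : seq nat) (m : nat) : nat :=
  head 0 [seq n <- S m | n \notin used].

Fixpoint used_reps (m : nat) : seq nat :=
  if m is m'.+1 then rcons (used_reps m') (first_fresh (used_reps m') m')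
  else [::].

Definition rep (m : nat) : nat := first_fresh (used_reps m) m.

Lemma size_used_reps m : size (used_reps m) = m.
Proof. by elim: m => //= m IH; rewrite size_rcons IH. Qed.

Lemma rep_used i m : i < m -> rep i \in used_reps m.
Proof.
elim: m => // m IH; rewrite ltnS leq_eqVlt => /orP [/eqP -> | /IH used_i] /=;
  by rewrite mem_rcons in_cons ?eqxx ?used_i ?orbT.
Qed.

Hypothesis S_large : forall m, uniq (S m) /\ m < size (S m).

(* A list of m+1 distinct entries cannot be contained in the m used ones. *)
Lemma rep_fresh m : rep m \in S m /\ rep m \notin used_reps m.
Proof.
rewrite /rep /first_fresh.
case E: [seq n <- S m | n \notin used_reps m] => [|a l] /=.
  have [uS szS] := S_large m; exfalso.
  have sub : {subset S m <= used_reps m}.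
    move=> n nS; apply: contraT => n_new.
    by have := mem_filter (fun n => n \notin used_reps m) n (S m);
       rewrite E nS n_new.
  by have := uniq_leq_size uS sub; rewrite size_used_reps leqNgt szS.
have : a \in [seq n <- S m | n \notin used_reps m] by rewrite E mem_head.
by rewrite mem_filter => /andP [].
Qed.

Lemma distinct_representatives :
  exists r : nat -> nat, injective r /\ forall m, r m \in S m.
Proof.
exists rep; split=> [i j|m]; last exact: (rep_fresh m).1.
case: (ltngtP i j) => // ij eq_rep.
  by have := (rep_fresh j).2; rewrite -eq_rep rep_used.
by have := (rep_fresh i).2; rewrite eq_rep rep_used.
Qed.
End DistinctRepresentatives.

Lemma extend_along_injection (A B C : Type) (r : A -> B) (P : B -> C -> Prop)
    (F : A -> C) :
  injective r -> (forall b, exists c, P b c) -> (forall a, P (r a) (F a)) ->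
  exists U : B -> C, (forall b, P b (U b)) /\ forall a, U (r a) = F a.
Proof.
move=> r_inj Pex PF.
have /choice [U hU] : forall b, exists c, P b c /\
    forall a, r a = b -> c = F a.
  move=> b; case: (pselect (exists a, r a = b)) => [[a <-]|no_a].
    by exists (F a); split=> // a' /r_inj ->.
  have [c Pc] := Pex b; exists c; split=> // a ra_b.
  by exfalso; apply: no_a; exists a.
by exists U; split=> [b|a]; [exact: (hU b).1 | exact: (hU (r a)).2].
Qed.

Section SelectedIntersections.
Variables (X : topologicalType) (V : nat -> set (set X)).

Definition selected_intersections (m : nat) : set (set X) :=
  [set P | exists (s : seq nat) (f : nat -> set X),
     [/\ uniq s, m < size s, (forall n, n \in s -> V n (f n)) &
         P = \bigcap_(n in [set` s]) f n]].

Lemma selected_intersections_semi_open :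
  extremally_disconnected X -> (forall n A, V n A -> semi_open A) ->
  forall m P, selected_intersections m P -> semi_open P.
Proof.
move=> ED Vsemi m P [s [f [_ _ Vf ->]]].
by apply: semi_open_bigcap_seq => // n /Vf /Vsemi.
Qed.

(* A point lies in some member of V n for infinitely many n, in particular
   for more than m of them; on those indices choose a member containing it. *)
Lemma selected_intersections_cover :
  (forall n, V n !=set0) ->
  (forall x : X, infinite_set [set n | exists2 A, V n A & A x]) ->
  forall (m : nat) (x : X), exists2 P, selected_intersections m P & P x.
Proof.
move=> Vne Vinf m x.
have [s s_sub m_lt] := infinite_set_fset m.+1 (Vinf x).
have /choice [f hf] : forall n, exists B,
    V n B /\ ((exists2 A, V n A & A x) -> B x).
  move=> n; case: (pselect (exists2 A, V n A & A x)) => [[A VA Ax]|no_A].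
    by exists A.
  by have [A VA] := Vne n; exists A; split=> // /no_A.
exists (\bigcap_(n in [set` s]) f n).
  by exists s, f; split=> //; [exact: fset_uniq | move=> n _; exact: (hf n).1].
by move=> n /s_sub /(hf n).2.
Qed.
End SelectedIntersections.

Theorem lemma6 (X : topologicalType) (V : nat -> set (set X)) :
  extremally_disconnected X -> semi_Rothberger X ->
  (forall n, finite_set (V n) /\ V n !=set0 /\
             (forall A, V n A -> semi_open A)) ->
  (forall x : X, infinite_set [set n | exists2 A, V n A & A x]) ->
  exists U : nat -> set X, (forall n, V n (U n)) /\
    (forall x : X, exists n, U n x).
Proof.
move=> ED SR HV Vinf.
have Vne n : V n !=set0 by have [_ []] := HV n.
have Vsemi n A : V n A -> semi_open A by have [_ [_]] := HV n; apply.
have [P [P_sel P_cov]] := SR (selected_intersections V) (fun m =>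
  conj (selected_intersections_semi_open ED Vsemi (m := m))
       (selected_intersections_cover Vne Vinf m)).
have /choice [Sf hSf] : forall m, exists sf : seq nat * (nat -> set X),
    [/\ uniq sf.1, m < size sf.1,
        forall n, n \in sf.1 -> V n (sf.2 n) &
        P m = \bigcap_(n in [set` sf.1]) sf.2 n].
  by move=> m; have [s [f]] := P_sel m; exists (s, f).
have [r [r_inj r_in]] := distinct_representatives (S := fun m => (Sf m).1)
  (fun m => let: And4 u sz _ _ := hSf m in conj u sz).
have [U [VU U_r]] := extend_along_injection (F := fun m => (Sf m).2 (r m))
  r_inj Vne (fun m => let: And4 _ _ Vf _ := hSf m in Vf _ (r_in m)).
exists U; split=> // x; have [m Pmx] := P_cov x.
exists (r m); rewrite U_r; case: (hSf m) => _ _ _ Pm.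
by move: Pmx; rewrite Pm; apply; exact: r_in.
Qed.
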